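(* Let $\mathcal V\subset\mathbb Q$ satisfy Hypothesis (H) and let $\mathcal R\subset\mathbb Q$ satisfy property $\star_{\mathcal V}$. Set $\Gamma=\mathcal V\setminus\mathcal R$ and $\Lambda=\psi(\Gamma)$. Then for every $g\in\mathscr H_{|\Lambda}$ there exists $f\in\mathscr H_{|\Gamma}$ such that $L(f)=g$.
   Context: Let $\mathbf K$ be a field and $\ell\geq 2$ an integer. Let $\mathscr H$ be the field of Hahn series $f=\sum_{\gamma\in\mathbb Q}f_\gamma z^\gamma$ with coefficients in $\mathbf K$ and well-ordered support $\operatorname{supp} f=\{\gamma: f_\gamma\neq 0\}$; for $Q\subset\mathbb Q$, $\mathscr H_{|Q}=\{f\in\mathscr H:\operatorname{supp} f\subset Q\}$. Let $\phi_\ell$ be the automorphism $f(z)\mapsto f(z^\ell)$. Let $L=a_n\phi_\ell^n+\dots+a_0$ with $n\geq1$, $a_i\in\mathbf K[z]$, $a_0a_n\neq0$, acting by $L(f)=\sum_i a_i f(z^{\ell^i})$. Let $\mathcal P(L)=\{(\ell^i,j): 0\le i\le n,\ j\in\operatorname{supp} a_i\}$. The Newton polygon of $L$ is the convex hull of $\{(\ell^i,j): 0\le i\le n,\ j\geq\operatorname{val} a_i\}\subset\mathbb R^2$; the slopes of its non-vertical edges form $\mathcal S(L)$. Define $\Psi(v)=\{v\ell^i+j:(\ell^i,j)\in\mathcal P(L)\}$, $\psi(v)=\min\Psi(v)$, $\pi(q)=\max\{(q-j)/\ell^i:(\ell^i,j)\in\mathcal P(L)\}$; images of sets are taken elementwise.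 Hypothesis (H) on $\mathcal V\subset\mathbb Q$: (1) every $f\in\mathscr H$ with $L(f)=0$ satisfies $\operatorname{supp} f\subset\mathcal V$; (2) $\mathcal V$ is well-ordered; (3) $-\mathcal S(L)\subset\mathcal V$; (4) $\bigcup_{v\in\mathcal V}\pi(\Psi(v))=\mathcal V$. A set $\mathcal R\subset\mathbb Q$ satisfies $\star_{\mathcal V}$ if (a) $-\mathcal S(L)\subset\mathcal R\subset\mathcal V$ and (b) $\bigcup_{v\in\mathcal V\setminus\mathcal R}\pi(\Psi(v))=\mathcal V\setminus\mathcal R$. *)

From mathcomp Require Import all_boot all_order all_algebra.
Set Implicit Arguments. Unset Strict Implicit. Unset Printing Implicit Defensive.
Import Order.TTheory GRing.Theory Num.Theory.
Local Open Scope ring_scope.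

Definition qset := rat -> Prop.

Definition wellordered (S : qset) : Prop :=
  forall A : qset, (forall x, A x -> S x) -> (exists x, A x) ->
    exists m, A m /\ forall x, A x -> m <= x.

(* Hahn series f = sum_{gamma in Q} f_gamma z^gamma are represented by their
   coefficient function rat -> K. *)
Definition supp (K : fieldType) (f : rat -> K) : qset := fun g => f g != 0.

Definition hahn (K : fieldType) (f : rat -> K) : Prop := wellordered (supp f).

Definition hahn_on (K : fieldType) (Q : qset) (f : rat -> K) : Prop :=
  hahn f /\ forall g, supp f g -> Q g.

Definition lpow (l i : nat) : rat := (l%:R) ^+ i.

(* The operator L = a_n phi^n + ... + a_0, with a : nat -> {poly K}
   (only a 0, ..., a n are used).  L(f) = sum_i a_i f(z^{l^i}), and the
   coefficient of z^gamma in a_i(z) f(z^{l^i}) is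
   sum_j (a_i)_j f_{(gamma - j)/l^i}. *)
Definition Lop (K : fieldType) (l n : nat) (a : nat -> {poly K})
    (f : rat -> K) : rat -> K :=
  fun gamma => \sum_(i < n.+1) \sum_(j < size (a i))
      (a i)`_j * f ((gamma - j%:R) / lpow l i).

Definition pval (K : fieldType) (p : {poly K}) : nat :=
  find (fun c => c != 0) p.

(* P(L) = {(l^i, j) : 0 <= i <= n, j in supp a_i}, encoded by the list of
   pairs (i, j). *)
Definition PL (K : fieldType) (n : nat) (a : nat -> {poly K}) : seq (nat * nat) :=
  [seq ij <- [seq (i, j) | i <- iota 0 n.+1, j <- iota 0 (size (a i))]
     | (a ij.1)`_ij.2 != 0].

Definition Psi (K : fieldType) (l n : nat) (a : nat -> {poly K}) (v : rat) : qset :=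
  fun w => exists2 ij, ij \in PL n a & w = v * lpow l ij.1 + (ij.2)%:R.

(* psi(v) = min Psi(v); the seed v*l^0 + val a_0 belongs to Psi(v) since a_0 != 0 *)
Definition psi (K : fieldType) (l n : nat) (a : nat -> {poly K}) (v : rat) : rat :=
  \big[Num.min/(v + (pval (a 0%N))%:R)]_(ij <- PL n a) (v * lpow l ij.1 + (ij.2)%:R).

Definition pi_ (K : fieldType) (l n : nat) (a : nat -> {poly K}) (q : rat) : rat :=
  \big[Num.max/(q - (pval (a 0%N))%:R)]_(ij <- PL n a) ((q - (ij.2)%:R) / lpow l ij.1).

(* The generating set of the Newton polygon:
   {(l^i, j) : 0 <= i <= n, j >= val a_i} (with a_i = 0 contributing nothing,
   its valuation being +oo). Points are taken in Q^2. *)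
Definition NPgen (K : fieldType) (l n : nat) (a : nat -> {poly K})
    (p : rat * rat) : Prop :=
  exists i : nat, [/\ (i <= n)%N, a i != 0, p.1 = lpow l i & (pval (a i))%:R <= p.2].

Definition conv_hull (A : rat * rat -> Prop) (p : rat * rat) : Prop :=
  exists (k : nat) (w : nat -> rat) (q : nat -> rat * rat),
    [/\ forall i, (i < k)%N -> 0 <= w i /\ A (q i),
        \sum_(i < k) w i = 1,
        p.1 = \sum_(i < k) w i * (q i).1 &
        p.2 = \sum_(i < k) w i * (q i).2].

Definition newton_polygon (K : fieldType) (l n : nat) (a : nat -> {poly K}) :=
  conv_hull (NPgen l n a).

(* S(L): slopes of the non-vertical edges of the Newton polygon N.
   A non-vertical edge is the intersection of N with a non-vertical supporting
   line y = s x + c (N lying in the half-plane y >= s x + c; the other side is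
   impossible since N is unbounded upwards), provided this intersection
   contains at least two distinct points. *)
Definition slopes (K : fieldType) (l n : nat) (a : nat -> {poly K}) : qset :=
  fun s => exists c : rat,
    (forall p, newton_polygon l n a p -> s * p.1 + c <= p.2) /\
    exists p q, [/\ newton_polygon l n a p, newton_polygon l n a q, p <> q,
                    p.2 = s * p.1 + c & q.2 = s * q.1 + c].

Definition hypH (K : fieldType) (l n : nat) (a : nat -> {poly K}) (V : qset) : Prop :=
  [/\ forall f : rat -> K, hahn f -> (forall g, Lop l n a f g = 0) ->
        forall g, supp f g -> V g,
      wellordered V,
      (forall s, slopes l n a s -> V (- s)) &
      (forall x, (exists v, V v /\ exists2 w, Psi l n a v w & x = pi_ l n a w) <-> V x)].

Definition starV (K : fieldType) (l n : nat) (a : nat -> {poly K}) (V R : qset) : Prop :=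
  [/\ (forall s, slopes l n a s -> R (- s)),
      (forall x, R x -> V x) &
      (forall x, (exists v, (V v /\ ~ R v) /\ exists2 w, Psi l n a v w & x = pi_ l n a w)
                 <-> (V x /\ ~ R x))].

From mathcomp Require Import all_boot all_order all_algebra.
From Stdlib Require Import Classical ClassicalEpsilon FunctionalExtensionality.
Import Order.TTheory GRing.Theory Num.Theory.
Local Open Scope ring_scope.

(* The coefficients of [f] are defined by well-founded recursion along
   [Gamma], which is well-ordered as a subset of [V].  For [v] in [Gamma], [v]
   is not in [R], so [-v] is not a slope of the Newton polygon and the minimum
   [psi v] of [Psi v] is attained at a single pair [(i, j)]: the coefficient
   of [z^(psi v)] in [L(f)] is [(a_i)_j f_v] plus terms [f_w] with [w < v],
   and this determines [f_v].  Outside [Lambda] the series [L(f)] vanishes: a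
   nonzero term [(a_i)_j f_w] at [q = w l^i + j] with [w] in [Gamma] puts [q]
   in [Psi w], hence [pi q] in [Gamma] by property (b) of [R], and
   [q = psi (pi q)]. *)

Lemma bigmin_seq_attained {d : Order.disp_t} {T : orderType d} {I : eqType}
    (s : seq I) (F : I -> T) (x0 : T) :
  \big[Order.min/x0]_(i <- s) F i = x0 \/
  exists2 i, i \in s & \big[Order.min/x0]_(i <- s) F i = F i.
Proof.
elim: s => [|u s IH]; first by rewrite big_nil; left.
rewrite big_cons; case: leP => _; first by right; exists u; rewrite ?mem_head.
by case: IH => [->|[t ts ->]]; [left | right; exists t; rewrite // inE ts orbT].
Qed.

Lemma bigmax_seq_attained {d : Order.disp_t} {T : orderType d} {I : eqType}
    (s : seq I) (F : I -> T) (x0 : T) :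
  \big[Order.max/x0]_(i <- s) F i = x0 \/
  exists2 i, i \in s & \big[Order.max/x0]_(i <- s) F i = F i.
Proof.
elim: s => [|u s IH]; first by rewrite big_nil; left.
rewrite big_cons; case: leP => _; last by right; exists u; rewrite ?mem_head.
by case: IH => [->|[t ts ->]]; [left | right; exists t; rewrite // inE ts orbT].
Qed.

Section WellFoundedFixpoint.

Context {A B : Type} {R : A -> A -> Prop} {F : (A -> B) -> A -> B}.
Hypothesis wfR : well_founded R.
Hypothesis F_local :
  forall h h' x, (forall y, R y x -> h y = h' y) -> F h x = F h' x.

Lemma wf_fixpoint (b0 : B) : exists f : A -> B, forall x, f x = F f x.
Proof.
pose mask x (rec : forall y, R y x -> B) y :=
  if excluded_middle_informative (R y x) is left Ryx then rec y Ryx else b0.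
pose step x rec := F (mask x rec) x.
exists (Fix wfR (fun _ => B) step) => x.
rewrite Fix_eq => [|y rec rec' eq_rec]; apply: F_local => z Rzx; rewrite /mask;
  by case: excluded_middle_informative.
Qed.

End WellFoundedFixpoint.

Lemma wellordered_sub {V G : qset} :
  wellordered V -> (forall x, G x -> V x) -> wellordered G.
Proof. by move=> woV GV A AG; apply: woV => x /AG /GV. Qed.

Definition lt_in (G : qset) (y x : rat) : Prop := G y /\ y < x.

Lemma wf_lt_in {G : qset} : wellordered G -> well_founded (lt_in G).
Proof.
move=> woG x; apply: NNPP => accNx.
have [y0 [Gy0 _] accNy0] : exists2 y, lt_in G y x & ~ Acc (lt_in G) y.
  apply: NNPP => allAcc; apply: accNx; constructor => y Ryx.
  by apply: NNPP => accNy; apply: allAcc; exists y.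
have [m [[Gm accNm] m_min]] := woG (fun y => G y /\ ~ Acc (lt_in G) y)
  (fun y => @proj1 _ _) (ex_intro _ y0 (conj Gy0 accNy0)).
apply: accNm; constructor => y [Gy ym]; apply: NNPP => accNy.
by have := m_min y (conj Gy accNy); rewrite leNgt ym.
Qed.

Lemma lpow_gt0 (l i : nat) : (2 <= l)%N -> 0 < lpow l i.
Proof. by move=> l_ge2; rewrite /lpow exprn_gt0 // ltr0n; case: l l_ge2. Qed.

Lemma lpow_inj (l i i' : nat) : (2 <= l)%N -> lpow l i = lpow l i' -> i = i'.
Proof.
by move=> l_ge2; rewrite /lpow -!natrX => /eqP; rewrite eqr_nat => /eqP /expnI; apply.
Qed.

Lemma pval_lt_size (K : fieldType) (p : {poly K}) : p != 0 -> (pval p < size p)%N.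
Proof.
move=> p_neq0; rewrite /pval -has_find; apply/hasP; exists (lead_coef p).
  by apply: mem_nth; rewrite prednK ?size_poly_gt0.
by rewrite lead_coef_eq0.
Qed.

Lemma coef_pval_neq0 (K : fieldType) (p : {poly K}) : p != 0 -> p`_(pval p) != 0.
Proof. by move=> /pval_lt_size; rewrite /pval -has_find => /(nth_find 0). Qed.

Lemma pval_leq (K : fieldType) (p : {poly K}) j : p`_j != 0 -> (pval p <= j)%N.
Proof.
by move=> pj_neq0; rewrite leqNgt; apply/negP => /(before_find 0); rewrite pj_neq0.
Qed.

Section NewtonData.

Context {K : fieldType} (l n : nat) (a : nat -> {poly K}).
Hypothesis l_ge2 : (2 <= l)%N.
Hypothesis a0_neq0 : a 0%N != 0.

Definition Psi_term (v : rat) (ij : nat * nat) : rat := v * lpow l ij.1 + ij.2%:R.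
Definition pi_term (q : rat) (ij : nat * nat) : rat := (q - ij.2%:R) / lpow l ij.1.

Lemma lpow_neq0 i : lpow l i != 0.
Proof. by rewrite gt_eqF // lpow_gt0. Qed.

Lemma Psi_termK v ij : pi_term (Psi_term v ij) ij = v.
Proof. by rewrite /pi_term /Psi_term addrK mulfK ?lpow_neq0. Qed.

Lemma pi_termK q ij : Psi_term (pi_term q ij) ij = q.
Proof. by rewrite /pi_term /Psi_term mulfVK ?lpow_neq0 ?subrK. Qed.

Lemma mem_PL ij :
  (ij \in PL n a) = [&& (ij.1 <= n)%N, (ij.2 < size (a ij.1))%N & (a ij.1)`_ij.2 != 0].
Proof.
case: ij => i j; rewrite /PL mem_filter andbC [RHS]andbA; congr (_ && _).
apply/allpairsPdep/andP => [[i' [j' [+ + [-> ->]]]] | [ilen jlt]].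
  by rewrite !mem_iota /= !add0n ltnS => -> ->.
by exists i, j; rewrite !mem_iota /= !add0n ltnS.
Qed.

Lemma uniq_PL : uniq (PL n a).
Proof.
rewrite filter_uniq // allpairs_uniq_dep ?iota_uniq // => [i _|[? ?] [? ?] _ _ [-> ->] //].
exact: iota_uniq.
Qed.

Lemma pval_PL i : (i <= n)%N -> a i != 0 -> (i, pval (a i)) \in PL n a.
Proof. by move=> ilen ai_neq0; rewrite mem_PL /= ilen pval_lt_size ?coef_pval_neq0. Qed.

Lemma psi_le v ij : ij \in PL n a -> psi l n a v <= Psi_term v ij.
Proof. by move=> ijPL; exact: ge_bigmin_seq. Qed.

Lemma psi_attained v : exists2 ij, ij \in PL n a & psi l n a v = Psi_term v ij.
Proof.
case: (bigmin_seq_attained (PL n a) (Psi_term v) (v + (pval (a 0%N))%:R)) => [|//].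
by exists (0%N, pval (a 0%N)); rewrite ?pval_PL // /Psi_term /lpow expr0 mulr1.
Qed.

Lemma pi_ge q ij : ij \in PL n a -> pi_term q ij <= pi_ l n a q.
Proof. by move=> ijPL; exact: le_bigmax_seq. Qed.

Lemma pi_attained q : exists2 ij, ij \in PL n a & pi_ l n a q = pi_term q ij.
Proof.
case: (bigmax_seq_attained (PL n a) (pi_term q) (q - (pval (a 0%N))%:R)) => [|//].
by exists (0%N, pval (a 0%N)); rewrite ?pval_PL // /pi_term /lpow expr0 divr1.
Qed.

Lemma psi_pi q : psi l n a (pi_ l n a q) = q.
Proof.
apply/eqP; rewrite eq_le; apply/andP; split.
  have [ij ijPL ->] := pi_attained q.
  by rewrite -{2}(pi_termK q ij) psi_le.
have [ij ijPL ->] := psi_attained (pi_ l n a q).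
rewrite -{1}(pi_termK q ij) /Psi_term lerD2r ler_pM2r ?lpow_gt0 //.
exact: pi_ge.
Qed.

Lemma psi_lt v v' : v' < v -> psi l n a v' < psi l n a v.
Proof.
move=> v'v; have [ij ijPL ->] := psi_attained v.
by apply: le_lt_trans (psi_le _ _ ijPL) _; rewrite /Psi_term ltrD2r ltr_pM2r ?lpow_gt0.
Qed.

Lemma pi_term_psi_lt v ij : ij \in PL n a -> Psi_term v ij != psi l n a v ->
  pi_term (psi l n a v) ij < v.
Proof.
move=> ijPL Psi_neq; rewrite ltNge le_eqVlt negb_or; apply/andP; split.
  by apply: contra Psi_neq => /eqP {1}->; rewrite pi_termK.
have := psi_le (pi_term (psi l n a v) ij) _ ijPL; rewrite pi_termK => psi_le_psi.
by apply/negP => /psi_lt; rewrite ltNge psi_le_psi.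
Qed.

Lemma PL_newton_polygon ij :
  ij \in PL n a -> newton_polygon l n a (lpow l ij.1, ij.2%:R).
Proof.
rewrite mem_PL => /and3P [ilen _ aij_neq0].
exists 1%N, (fun _ => 1), (fun _ => (lpow l ij.1, ij.2%:R)).
split; rewrite ?big_ord1 ?mul1r // => k _; split=> //; exists ij.1; split => //.
  by apply: contraNneq aij_neq0 => ->; rewrite coef0.
by rewrite ler_nat pval_leq.
Qed.

(* A generator [(l^i, j)] satisfies [j >= val a_i >= psi v - v l^i], and
   convex combinations preserve the inequality. *)
Lemma newton_polygon_above_psi v p :
  newton_polygon l n a p -> - v * p.1 + psi l n a v <= p.2.
Proof.
move=> [k [w [q [wq w1 -> ->]]]].
rewrite -[psi _ _ _ _]mul1r -w1 mulr_suml mulr_sumr -big_split /=.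
apply: ler_sum => i _; have [w_ge0 [j [jlen aj_neq0 -> pvalj]]] := wq i (ltn_ord i).
rewrite mulrCA -mulrDr ler_wpM2l // mulNr -lerBrDl opprK.
apply: le_trans (psi_le v _ (pval_PL _ jlen aj_neq0)) _; rewrite /Psi_term /=.
by rewrite addrC lerD2r.
Qed.

(* Two distinct pairs realizing [psi v] span an edge of slope [-v]. *)
Lemma psi_argmin_unique v ij ij' : ~ slopes l n a (- v) ->
  ij \in PL n a -> ij' \in PL n a ->
  Psi_term v ij = psi l n a v -> Psi_term v ij' = psi l n a v -> ij = ij'.
Proof.
case: ij ij' => [i j] [i' j'] no_slope ijPL ijPL' psi_ij psi_ij'.
have [eq_i|i_neq] := eqVneq i i'.
  move: psi_ij'; rewrite -eq_i -psi_ij /Psi_term /= => /addrI /eqP.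
  by rewrite eqr_nat => /eqP ->.
case: no_slope; exists (psi l n a v); split => [p|]; first exact: newton_polygon_above_psi.
exists (lpow l i, j%:R), (lpow l i', j'%:R); split.
- exact: (PL_newton_polygon _ ijPL).
- exact: (PL_newton_polygon _ ijPL').
- by case=> /lpow_inj eq_i; move: i_neq; rewrite eq_i ?eqxx.
- by rewrite /= -psi_ij mulNr addKr.
- by rewrite /= -psi_ij' mulNr addKr.
Qed.

Definition psi_coef (v : rat) : K :=
  \sum_(ij <- PL n a | Psi_term v ij == psi l n a v) (a ij.1)`_ij.2.

Lemma psi_coef_neq0 v : ~ slopes l n a (- v) -> psi_coef v != 0.
Proof.
move=> no_slope; have [ij ijPL psi_ij] := psi_attained v.
rewrite /psi_coef (big_rem _ ijPL) -psi_ij eqxx big1_seq /=.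
  by rewrite addr0; move: ijPL; rewrite mem_PL => /and3P [].
move=> ij' /andP [/eqP psi_ij' ij'_rem]; exfalso.
have eq_ij : ij' = ij.
  by apply: psi_argmin_unique no_slope (mem_rem ij'_rem) ijPL psi_ij' (esym psi_ij).
by move: ij'_rem; rewrite eq_ij mem_rem_uniqF ?uniq_PL.
Qed.

Lemma LopE (f : rat -> K) q :
  Lop l n a f q = \sum_(ij <- PL n a) (a ij.1)`_ij.2 * f (pi_term q ij).
Proof.
have sum_iota m (G : nat -> K) : \sum_(i <- iota 0 m) G i = \sum_(i < m) G i.
  by rewrite -(big_mkord xpredT) /index_iota subn0.
rewrite /Lop /PL big_filter [RHS]big_mkcond big_allpairs_dep sum_iota.
apply: eq_bigr => i _; rewrite sum_iota; apply: eq_bigr => j _ /=.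
by case: eqP => // ->; rewrite mul0r.
Qed.

Lemma Lop_psi (f : rat -> K) v :
  Lop l n a f (psi l n a v) = psi_coef v * f v +
    \sum_(ij <- PL n a | Psi_term v ij != psi l n a v)
      (a ij.1)`_ij.2 * f (pi_term (psi l n a v) ij).
Proof.
rewrite LopE (bigID (fun ij => Psi_term v ij == psi l n a v)) /= /psi_coef.
by rewrite mulr_suml; congr (_ + _); apply: eq_bigr => ij /eqP <-; rewrite Psi_termK.
Qed.

Lemma Lop_supp_psi {G : qset} {f : rat -> K} {q : rat} :
  (forall x, f x != 0 -> G x) ->
  (forall v w, G v -> Psi l n a v w -> G (pi_ l n a w)) ->
  Lop l n a f q != 0 -> exists2 v, G v & q = psi l n a v.
Proof.
move=> suppG G_pi Lq_neq0; exists (pi_ l n a q); last by rewrite psi_pi.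
have [ij ijPL f_neq0] : exists2 ij, ij \in PL n a & f (pi_term q ij) != 0.
  apply: NNPP => f_eq0; move: Lq_neq0; rewrite LopE big1_seq ?eqxx //.
  move=> ij /andP [_ ijPL]; apply/eqP; rewrite mulf_eq0; apply/orP; right.
  by apply: contraT => f_neq0; case: f_eq0; exists ij.
by apply: (G_pi _ _ (suppG _ f_neq0)); exists ij => //; exact: (esym (pi_termK q ij)).
Qed.

Section Solution.

Context {G : qset} (g : rat -> K).
Hypothesis G_wo : wellordered G.
Hypothesis G_no_slope : forall v, G v -> ~ slopes l n a (- v).

Definition restrict (h : rat -> K) (x : rat) : K :=
  if excluded_middle_informative (G x) then h x else 0.

(* The coefficient [f v] solving [L(f)(psi v) = g (psi v)], given the
   coefficients [h w] for [w < v]. *)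
Definition solution_step (h : rat -> K) (v : rat) : K :=
  if excluded_middle_informative (G v) then
    (g (psi l n a v) - \sum_(ij <- PL n a | Psi_term v ij != psi l n a v)
        (a ij.1)`_ij.2 * restrict h (pi_term (psi l n a v) ij)) / psi_coef v
  else 0.

Lemma solution_step_out h v : ~ G v -> solution_step h v = 0.
Proof. by rewrite /solution_step; case: excluded_middle_informative. Qed.

Lemma solution_step_in h v : G v ->
  psi_coef v * solution_step h v = g (psi l n a v) -
    \sum_(ij <- PL n a | Psi_term v ij != psi l n a v)
      (a ij.1)`_ij.2 * restrict h (pi_term (psi l n a v) ij).
Proof.
move=> Gv; rewrite /solution_step; case: excluded_middle_informative => // Gv'.
by rewrite mulrC divfK //; apply: psi_coef_neq0; apply: G_no_slope.
Qed.

Lemma solution_step_local h h' v :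
  (forall w, lt_in G w v -> h w = h' w) -> solution_step h v = solution_step h' v.
Proof.
move=> eq_h; rewrite /solution_step; case: excluded_middle_informative => // Gv.
congr ((_ - _) / _); rewrite big_seq_cond [RHS]big_seq_cond.
apply: eq_bigr => ij /andP [ijPL Psi_neq]; congr (_ * _); rewrite /restrict.
case: excluded_middle_informative => // Gw.
by rewrite eq_h //; split; last exact: pi_term_psi_lt.
Qed.

Lemma exists_solution_on_psi : exists f : rat -> K,
  (forall x, f x != 0 -> G x) /\ forall v, G v -> Lop l n a f (psi l n a v) = g (psi l n a v).
Proof.
have [f f_fix] := wf_fixpoint (wf_lt_in G_wo) solution_step_local 0.
have suppG x : f x != 0 -> G x.
  move=> fx_neq0; apply: NNPP => nGx.
  by move: fx_neq0; rewrite f_fix solution_step_out ?eqxx.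
have restrict_f : restrict f = f.
  apply: functional_extensionality => x; rewrite /restrict.
  case: excluded_middle_informative => // nGx.
  by apply/esym/eqP; apply: contraT => /suppG.
exists f; split => // v Gv.
by rewrite Lop_psi {1}f_fix solution_step_in // restrict_f subrK.
Qed.

End Solution.

End NewtonData.

Theorem mainTheorem16 (K : fieldType) (l n : nat) (a : nat -> {poly K})
    (V R : qset) :
  (2 <= l)%N -> (1 <= n)%N -> a 0%N != 0 -> a n != 0 ->
  hypH l n a V -> starV l n a V R ->
  let Gamma : qset := fun v => V v /\ ~ R v in
  let Lambda : qset := fun x => exists2 v, Gamma v & x = psi l n a v in
  forall g : rat -> K, hahn_on Lambda g ->
    exists f : rat -> K, hahn_on Gamma f /\ Lop l n a f = g.
Proof.
move=> l_ge2 _ a0_neq0 _ [_ V_wo _ _] [R_slopes _ starR] Gamma Lambda g [_ supp_g].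
have Gamma_wo : wellordered Gamma by apply: wellordered_sub V_wo _ => v [].
have Gamma_no_slope v : Gamma v -> ~ slopes l n a (- v).
  by move=> [_ nRv] /R_slopes; rewrite opprK.
have Gamma_pi v w : Gamma v -> Psi l n a v w -> Gamma (pi_ l n a w).
  by move=> Gv Psi_vw; apply/starR; exists v; split => //; exists w.
have [f [suppG f_psi]] := exists_solution_on_psi l n a l_ge2 a0_neq0 g Gamma_wo Gamma_no_slope.
exists f; split; first by split=> //; apply: wellordered_sub Gamma_wo suppG.
apply: functional_extensionality => q.
have [[v Gv ->]|nLq] := classic (Lambda q); first exact: f_psi.
have -> : g q = 0 by apply/eqP; apply: contraT => /supp_g.
by apply/eqP; apply: contraT => /(Lop_supp_psi l n a l_ge2 a0_neq0 suppG Gamma_pi).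
Qed.
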